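(* In the setting of the context, for every $N\in\mathcal N$: (1) $N^e=\{u\in D: f(d^\ast ud)\in N \text{ for every } d\in D\}$; (2) $N^{ec}=\bigcap_{\sigma\in G}N_\sigma$; (3) $(N_\sigma)^e=N^e$ for every $\sigma\in G$; (4) $N^{ece}=N^e$. For every $M\in\mathcal M$: (5) $(M^c)_\sigma=M^c$ for every $\sigma\in G$; (6) $M^{cec}=M^c$.
   Context: Let $K/F$ be a finite Galois extension of fields of characteristic $0$ with Galois group $G$, $n=|G|$; write $k^\sigma$ for the image of $k$ under $\sigma$. Let $\Phi$ be a normalized $2$-cocycle and $D=(K/F,\Phi)$ the crossed product: right $K$-vector space with basis $(e_\sigma)_{\sigma\in G}$, $e_{\mathrm{id}}=1$, multiplication $(\sum e_\sigma c_\sigma)(\sum e_\tau d_\tau)=\sum e_{\sigma\tau}\Phi(\sigma,\tau)c_\sigma^\tau d_\tau$. Assume $D$ is a division algebra and $\ast$ an involution on $D$ with $K^\ast\subseteq K$. A unital hermitian cone on a ring $R$ with involution $\ast$ is a subset $M\subseteq\{r:r^\ast=r\}$ with $1\in M$, $M+M\subseteq M$, $aMa^\ast\subseteq M$ for all $a\in R$, $M\cap-M=\{0\}$. Assume $a_\sigma:=e_\sigma^\ast e_\sigma\in K$ for all $\sigma$, and let $\mathcal N$ be the set of unital hermitian cones on $(K,\ast)$ containing all $a_\sigma$; assume $\mathcal N\neq\emptyset$. For $N\in\mathcal N$, $N_\sigma=\{k\in K: a_\sigma k^\sigma\in N\}$. Let $\mathcal M$ be the set of unital hermitian cones on $(D,\ast)$.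 Define $f\colon D\to K$ by $f(\sum e_\sigma c_\sigma)=c_{\mathrm{id}}$, and $\lambda\colon D\to M_n(K)$ by $ae_\tau=\sum_\sigma e_\sigma\lambda(a)_{\sigma\tau}$. Let $A=\mathrm{diag}(a_\sigma)_{\sigma\in G}$. For $M\in\mathcal M$ put $M^c=M\cap K$, and for $N\in\mathcal N$ put $N^e=\{c\in D: x^\ast A\lambda(c)x\in N\text{ for every column vector } x\in K^n\}$, where $x^\ast$ is the row vector of the $\ast$-images of the entries of $x$. (Then $M^c\in\mathcal N$ and $N^e\in\mathcal M$.) Compositions are written as superscripts, e.g. $N^{ec}=(N^e)^c$. *)

From HB Require Import structures.
From mathcomp Require Import all_boot all_order all_algebra all_fingroup.
Set Implicit Arguments. Unset Strict Implicit. Unset Printing Implicit Defensive.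
Import GRing.Theory.
Local Open Scope ring_scope.

(* The Galois group is the whole finite group gT; its right action on K is
   [act]: k^s = act s k, with (k^s)^t = k^(s*t).
   An element sum_s e_s c_s of the crossed product D = (K/F, Phi) is
   represented by its coefficient function c : {ffun gT -> K}. *)

Section CrossedProduct.
Variables (gT : finGroupType) (K : fieldType).
Variable act : gT -> {rmorphism K -> K}.
Variable Phi : gT -> gT -> K.

Definition cp_e (s : gT) : {ffun gT -> K} := [ffun t => (t == s)%:R].
Definition cp_one : {ffun gT -> K} := cp_e 1%g.
Definition cp_emb (k : K) : {ffun gT -> K} :=
  [ffun t => if t == 1%g then k else 0].
(* (sum e_s c_s)(sum e_t d_t) = sum e_(st) Phi(s,t) c_s^t d_t *)
Definition cp_mul (x y : {ffun gT -> K}) : {ffun gT -> K} :=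
  [ffun r => \sum_(s : gT) \sum_(t : gT | (s * t)%g == r)
                Phi s t * act t (x s) * y t].
Definition cp_f (x : {ffun gT -> K}) : K := x 1%g.
(* a e_t = sum_s e_s lambda(a)_(s,t) *)
Definition cp_lambda (c : {ffun gT -> K}) (s t : gT) : K := cp_mul c (cp_e t) s.

Variable starK : K -> K.
Variable starD : {ffun gT -> K} -> {ffun gT -> K}.

Definition cp_a (s : gT) : K := cp_f (cp_mul (starD (cp_e s)) (cp_e s)).

Definition cone_ext (N : K -> Prop) : {ffun gT -> K} -> Prop :=
  fun c => forall x : gT -> K,
    N (\sum_(s : gT) \sum_(t : gT) starK (x s) * cp_a s * cp_lambda c s t * x t).

Definition cone_twist (N : K -> Prop) (s : gT) : K -> Prop :=
  fun k => N (cp_a s * act s k).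

Definition cone_contr (M : {ffun gT -> K} -> Prop) : K -> Prop :=
  fun k => M (cp_emb k).
End CrossedProduct.

Definition is_involution (T : zmodType) (mul : T -> T -> T) (star : T -> T) :=
  [/\ forall x y, star (x + y) = star x + star y,
      forall x y, star (mul x y) = mul (star y) (star x)
    & forall x, star (star x) = x].

Definition herm_cone (T : zmodType) (mul : T -> T -> T) (one : T)
    (star : T -> T) (M : T -> Prop) : Prop :=
  [/\ forall x, M x -> star x = x,
      M one,
      forall x y, M x -> M y -> M (x + y),
      forall a x, M x -> M (mul (mul a x) (star a))
    & forall x, (M x /\ M (- x)) <-> x = 0].

From HB Require Import structures.
From mathcomp Require Import all_boot all_order all_algebra all_fingroup.
Set Implicit Arguments. Unset Strict Implicit. Unset Printing Implicit Defensive.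
Import GRing.Theory.
Local Open Scope ring_scope.

(* Everything rests on one computation: the trace f(e_s^* z) equals a_s z_s.
   It holds because e_s^* = a_s e_s^-1 (as a_s = e_s^* e_s lies in K) and the
   inverse of e_s is supported at s^-1.  Consequences:
   - the quadratic form x^* A lambda(u) x equals f(d^* u d) for
     d = sum_s e_s x_s, which is (1);
   - replacing d by d e_s multiplies f(d^* u d) by a_s and twists it by s,
     so the extension of N_s is the extension of N, which is (3);
   - on K, lambda is diagonal with entries k^s, so the quadratic form is
     sum_s x_s^* (a_s k^s) x_s, which gives (2) for every additive set
     closed under conjugation, in particular for N and for M^c;
   - e_s^* k e_s = a_s k^s, and e_s is a unit, which gives (5).
   (4) and (6) follow by combining these.  The first part of the file
   develops the arithmetic of the crossed product (monomials, bilinearity,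
   associativity via the cocycle identity, units). *)

Section CrossedProduct.
Variables (gT : finGroupType) (K : fieldType).
Variable act : gT -> {rmorphism K -> K}.
Variable Phi : gT -> gT -> K.
Local Notation D := {ffun gT -> K}.
Local Notation mul := (cp_mul act Phi).

Definition monomial (s : gT) (c : K) : D := [ffun t => if t == s then c else 0].

Lemma cp_e_monomial s : cp_e K s = monomial s 1.
Proof. by apply/ffunP=> t; rewrite !ffunE; case: eqP. Qed.

Lemma cp_emb_monomial k : cp_emb gT k = monomial 1 k.
Proof. by []. Qed.

Lemma monomial1_inj : injective (monomial 1).
Proof. by move=> a b /ffunP/(_ 1%g); rewrite !ffunE eqxx. Qed.

Lemma monomial_decomp (x : D) : x = \sum_s monomial s (x s).
Proof.
apply/ffunP => r; rewrite sum_ffunE (bigD1 r) //= big1 ?addr0 ?ffunE ?eqxx //.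
by move=> s Hs; rewrite ffunE eq_sym (negbTE Hs).
Qed.

Lemma sum_pairs_supp_r (F : gT -> gT -> K) r t :
  (forall u v, v != t -> F u v = 0) ->
  \sum_u \sum_(v | (u * v)%g == r) F u v = F (r * t^-1)%g t.
Proof.
move=> Ft; rewrite (bigD1 (r * t^-1)%g) //= [X in _ + X = _]big1.
  rewrite (bigD1 t) ?mulgKV //= big1 ?addr0 // => v /andP[_ Hvt].
  by rewrite Ft.
move=> u Hu; rewrite big1 // => v Huv; case: (eqVneq v t) => [Evt|]; last exact: Ft.
by move: Huv Hu; rewrite Evt => /eqP <-; rewrite mulgK eqxx.
Qed.

Lemma sum_pairs_supp_l (F : gT -> gT -> K) r s :
  (forall u v, u != s -> F u v = 0) ->
  \sum_u \sum_(v | (u * v)%g == r) F u v = F s (s^-1 * r)%g.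
Proof.
move=> Fs; rewrite (bigD1 s) //= [X in _ + X]big1 ?addr0 => [|u Hu]; last first.
  by rewrite big1 // => v _; rewrite Fs.
rewrite (bigD1 (s^-1 * r)%g) ?mulKVg //= big1 ?addr0 // => v /andP[Hv Hvr].
by move: Hvr; rewrite -(eqP Hv) mulKg eqxx.
Qed.

Lemma mul_monomial_r x t d r :
  mul x (monomial t d) r = Phi (r * t^-1)%g t * act t (x (r * t^-1)%g) * d.
Proof.
rewrite /cp_mul ffunE (sum_pairs_supp_r _ _ (t:=t)) ?ffunE ?eqxx // => u v.
by rewrite ffunE => /negbTE ->; rewrite mulr0.
Qed.

Lemma mul_monomial_l s c y r :
  mul (monomial s c) y r =
  Phi s (s^-1 * r)%g * act (s^-1 * r)%g c * y (s^-1 * r)%g.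
Proof.
rewrite /cp_mul ffunE (sum_pairs_supp_l _ _ (s:=s)) ?ffunE ?eqxx // => u v.
by rewrite ffunE => /negbTE ->; rewrite rmorph0 mulr0 mul0r.
Qed.

Lemma monomial_mul s c t d :
  mul (monomial s c) (monomial t d) = monomial (s * t)%g (Phi s t * act t c * d).
Proof.
apply/ffunP=> r; rewrite mul_monomial_l !ffunE.
case: (eqVneq r (s * t)%g) => [->|Hr]; first by rewrite mulKg !eqxx.
case: eqP => [Hst|]; last by rewrite mulr0.
by case/eqP: Hr; rewrite -Hst mulKVg.
Qed.

Lemma cp_mulDl x x' y : mul (x + x') y = mul x y + mul x' y.
Proof.
apply/ffunP=> r; rewrite !ffunE -big_split /=; apply: eq_bigr => s _.
rewrite -big_split /=; apply: eq_bigr => t _.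
by rewrite ffunE rmorphD /= mulrDr mulrDl.
Qed.

Lemma cp_mulDr x y y' : mul x (y + y') = mul x y + mul x y'.
Proof.
apply/ffunP=> r; rewrite !ffunE -big_split /=; apply: eq_bigr => s _.
rewrite -big_split /=; apply: eq_bigr => t _.
by rewrite ffunE mulrDr.
Qed.

Lemma cp_mul0l y : mul 0 y = 0.
Proof.
apply/ffunP=> r; rewrite !ffunE big1 // => s _; rewrite big1 // => t _.
by rewrite ffunE rmorph0 mulr0 mul0r.
Qed.

Lemma cp_mul0r y : mul y 0 = 0.
Proof.
apply/ffunP=> r; rewrite !ffunE big1 // => s _; rewrite big1 // => t _.
by rewrite ffunE mulr0.
Qed.

Lemma cp_mul_suml (I : Type) (r : seq I) (P : pred I) (F : I -> D) y :
  mul (\sum_(i <- r | P i) F i) y = \sum_(i <- r | P i) mul (F i) y.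
Proof. exact: (big_morph (mul^~ y) (fun a b => cp_mulDl a b y) (cp_mul0l y)). Qed.

Lemma cp_mul_sumr (I : Type) (r : seq I) (P : pred I) (F : I -> D) y :
  mul y (\sum_(i <- r | P i) F i) = \sum_(i <- r | P i) mul y (F i).
Proof. exact: (big_morph (mul y) (cp_mulDr y) (cp_mul0r y)). Qed.

Lemma cp_f_sum (I : Type) (r : seq I) (P : pred I) (F : I -> D) :
  cp_f (\sum_(i <- r | P i) F i) = \sum_(i <- r | P i) cp_f (F i).
Proof. by rewrite /cp_f sum_ffunE. Qed.

Lemma cp_f_mul_e y s :
  cp_f (mul y (monomial s 1)) = Phi (s^-1)%g s * act s (y (s^-1)%g).
Proof. by rewrite /cp_f mul_monomial_r mul1g mulr1. Qed.

Lemma cp_mul_coord u (d : D) s :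
  mul u d s = \sum_t cp_lambda act Phi u s t * d t.
Proof.
rewrite {1}(monomial_decomp d) cp_mul_sumr sum_ffunE; apply: eq_bigr => t _.
by rewrite /cp_lambda cp_e_monomial !mul_monomial_r mulr1.
Qed.

Hypothesis act1 : forall k, act 1%g k = k.
Hypothesis actM : forall (s t : gT) k, act (s * t)%g k = act t (act s k).
Hypothesis Phi_norm : forall s, Phi 1%g s = 1 /\ Phi s 1%g = 1.
Hypothesis Phi_cocycle : forall s t r,
  Phi (s * t)%g r * act r (Phi s t) = Phi s (t * r)%g * Phi t r.

(* Associativity: by trilinearity it reduces to monomials, where it is
   exactly the cocycle identity. *)
Lemma monomial_mulA s c t d r g :
  mul (mul (monomial s c) (monomial t d)) (monomial r g) =
  mul (monomial s c) (mul (monomial t d) (monomial r g)).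
Proof.
rewrite !monomial_mul mulgA; congr monomial.
rewrite !rmorphM /= actM !mulrA Phi_cocycle; congr (_ * _).
by rewrite -!mulrA; congr (_ * _); rewrite mulrCA.
Qed.

Lemma cp_mulA x y z : mul (mul x y) z = mul x (mul y z).
Proof.
rewrite (monomial_decomp x) !cp_mul_suml; apply: eq_bigr => s _.
rewrite (monomial_decomp y) !(cp_mul_sumr, cp_mul_suml); apply: eq_bigr => t _.
rewrite (monomial_decomp z) !cp_mul_sumr; apply: eq_bigr => r _.
exact: monomial_mulA.
Qed.

Lemma cp_mul1l x : mul (monomial 1 1) x = x.
Proof.
apply/ffunP=> r; rewrite mul_monomial_l invg1 mul1g (proj1 (Phi_norm r)).
by rewrite rmorph1 !mul1r.
Qed.

Lemma cp_mul1r x : mul x (monomial 1 1) = x.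
Proof.
apply/ffunP=> r; rewrite mul_monomial_r invg1 mulg1 (proj2 (Phi_norm r)).
by rewrite act1 mul1r mulr1.
Qed.

Lemma monomial_split s c : monomial s c = mul (monomial s 1) (monomial 1 c).
Proof. by rewrite monomial_mul mulg1 (proj2 (Phi_norm s)) rmorph1 !mul1r. Qed.

Lemma emb_mul_e k s :
  mul (monomial 1 k) (monomial s 1) = mul (monomial s 1) (monomial 1 (act s k)).
Proof.
by rewrite -monomial_split monomial_mul mul1g (proj1 (Phi_norm _)) mul1r mulr1.
Qed.

Lemma emb_mul a b : mul (monomial 1 a) (monomial 1 b) = monomial 1 (a * b).
Proof. by rewrite monomial_mul mulg1 (proj1 (Phi_norm 1%g)) act1 mul1r. Qed.

Lemma cp_f_emb_l k y : cp_f (mul (monomial 1 k) y) = k * cp_f y.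
Proof.
by rewrite /cp_f mul_monomial_l invg1 mulg1 (proj1 (Phi_norm 1%g)) act1 mul1r.
Qed.

Lemma cp_f_emb_r k y : cp_f (mul y (monomial 1 k)) = cp_f y * k.
Proof.
by rewrite /cp_f mul_monomial_r invg1 mulg1 (proj1 (Phi_norm 1%g)) act1 mul1r.
Qed.

Variable starK : K -> K.
Variable starD : D -> D.
Hypothesis starD_inv : is_involution mul starD.
Hypothesis starK_def : forall k, starD (cp_emb gT k) = cp_emb gT (starK k).
Hypothesis D_div : forall x : D, x != 0 ->
  exists y, mul x y = cp_one gT K /\ mul y x = cp_one gT K.
Hypothesis a_in_K : forall s, exists k,
  mul (starD (cp_e K s)) (cp_e K s) = cp_emb gT k.
Hypothesis Phi_neq0 : forall s t, Phi s t != 0.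

Local Notation a_ := (cp_a act Phi starD).
Local Notation ext := (cone_ext act Phi starK starD).
Local Notation twist := (cone_twist act Phi starD).
Local Notation contr := cone_contr.

Lemma starDD x y : starD (x + y) = starD x + starD y.
Proof. by case: starD_inv. Qed.

Lemma starDM x y : starD (mul x y) = mul (starD y) (starD x).
Proof. by case: starD_inv. Qed.

Lemma starDK x : starD (starD x) = x.
Proof. by case: starD_inv. Qed.

Lemma starD_sum (I : Type) (r : seq I) (P : pred I) (F : I -> D) :
  starD (\sum_(i <- r | P i) F i) = \sum_(i <- r | P i) starD (F i).
Proof.
apply: (big_morph starD starDD); have := starDD 0 0.
by rewrite addr0 => /(congr1 (fun z => z - starD 0)); rewrite addrK subrr => /esym.
Qed.

Lemma starD1 : starD (monomial 1 1) = monomial 1 1.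
Proof.
rewrite -[starD _]cp_mul1l -{1}(starDK (monomial 1 1)) -starDM cp_mul1l.
exact: starDK.
Qed.

Lemma starKK k : starK (starK k) = k.
Proof. by apply: monomial1_inj; rewrite -!cp_emb_monomial -!starK_def starDK. Qed.

Lemma starK1 : starK 1 = 1.
Proof. by apply: monomial1_inj; rewrite -cp_emb_monomial -starK_def starD1. Qed.

Lemma conj_comp a b x :
  mul (mul (starD a) (mul (mul (starD b) x) b)) a =
  mul (mul (starD (mul b a)) x) (mul b a).
Proof. by rewrite starDM !cp_mulA. Qed.

Lemma starD_monomial s c :
  starD (monomial s c) = mul (monomial 1 (starK c)) (starD (monomial s 1)).
Proof. by rewrite monomial_split starDM -cp_emb_monomial starK_def. Qed.

Lemma cp_e_unit s :
  exists y, mul (monomial s 1) y = monomial 1 1 /\ mul y (monomial s 1) = monomial 1 1.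
Proof.
rewrite -cp_e_monomial -[monomial 1 1]cp_e_monomial; apply: D_div.
by apply/eqP => /ffunP/(_ s); rewrite !ffunE eqxx; apply/eqP; exact: oner_neq0.
Qed.

Lemma left_inv_e_supp s y r :
  mul y (monomial s 1) = monomial 1 1 -> r != s -> y (r^-1)%g = 0.
Proof.
move=> ys1 rs; have := congr1 (fun x : D => x (r^-1 * s)%g) ys1.
rewrite /= mul_monomial_r mulgK mulr1 ffunE; case: eqP => [rs1|_].
  by case/eqP: rs; apply: (mulgI (r^-1)%g); rewrite rs1 mulVg.
by move/eqP; rewrite mulf_eq0 (negbTE (Phi_neq0 _ _)) fmorph_eq0 => /eqP.
Qed.

(* The key computation: e_s^* = a_s e_s^-1, hence f(e_s^* e_r) = 0 for
   r != s, and f(e_s^* z) = a_s z_s. *)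
Lemma cp_f_star_e_ne s r : r != s -> cp_f (mul (starD (monomial s 1)) (monomial r 1)) = 0.
Proof.
move=> rs; have [y [sy1 ys1]] := cp_e_unit s.
have [k Ek] := a_in_K s; rewrite cp_e_monomial in Ek.
have -> : starD (monomial s 1) = mul (monomial 1 k) y.
  by rewrite -cp_emb_monomial -Ek cp_mulA sy1 cp_mul1r.
by rewrite cp_mulA cp_f_emb_l cp_f_mul_e (left_inv_e_supp ys1 rs) rmorph0 !mulr0.
Qed.

Lemma cp_f_star_e s z : cp_f (mul (starD (cp_e K s)) z) = a_ s * z s.
Proof.
rewrite {1}(monomial_decomp z) cp_mul_sumr cp_f_sum (bigD1 s) //= big1 ?addr0.
  by rewrite monomial_split -cp_mulA cp_f_emb_r -cp_e_monomial.
by move=> r rs; rewrite monomial_split -cp_mulA cp_f_emb_r cp_e_monomial cp_f_star_e_ne ?mul0r.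
Qed.

Lemma quad_form_trace (u d : D) :
  \sum_s \sum_t starK (d s) * a_ s * cp_lambda act Phi u s t * d t =
  cp_f (mul (mul (starD d) u) d).
Proof.
rewrite [X in starD X](monomial_decomp d) starD_sum !cp_mul_suml cp_f_sum.
apply: eq_bigr => s _; rewrite starD_monomial !cp_mulA cp_f_emb_l -cp_e_monomial.
rewrite cp_f_star_e cp_mul_coord !mulr_sumr; apply: eq_bigr => t _.
by rewrite !mulrA.
Qed.

Lemma ext_trace_char (N : K -> Prop) u :
  ext N u <-> (forall d, N (cp_f (mul (mul (starD d) u) d))).
Proof.
split=> Nu d; first by rewrite -quad_form_trace; exact: Nu.
have := Nu [ffun s => d s]; rewrite -quad_form_trace.
by under eq_bigr do under eq_bigr do rewrite !ffunE.
Qed.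

Lemma cp_f_twist s y :
  cp_f (mul (mul (starD (cp_e K s)) y) (cp_e K s)) = a_ s * act s (cp_f y).
Proof.
rewrite cp_mulA cp_f_star_e; congr (_ * _).
by rewrite cp_e_monomial mul_monomial_r mulgV (proj1 (Phi_norm _)) !mul1r mulr1.
Qed.

(* (3): (N_s)^e = N^e, since d |-> d e_s is a bijection of D. *)
Lemma ext_twist (N : K -> Prop) s u : ext (twist N s) u <-> ext N u.
Proof.
have twistE d : a_ s * act s (cp_f (mul (mul (starD d) u) d)) =
    cp_f (mul (mul (starD (mul d (cp_e K s))) u) (mul d (cp_e K s))).
  by rewrite -cp_f_twist conj_comp.
have [y [_ ys1]] := cp_e_unit s.
split=> /ext_trace_char Nu; apply/ext_trace_char => d; last first.
  by rewrite /cone_twist twistE; exact: Nu.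
by have := Nu (mul d y); rewrite /cone_twist twistE cp_e_monomial (cp_mulA d y) ys1 cp_mul1r.
Qed.

Lemma lambda_emb k s t : cp_lambda act Phi (cp_emb gT k) s t = act s k * (s == t)%:R.
Proof.
rewrite /cp_lambda mul_monomial_l invg1 !mul1g (proj1 (Phi_norm _)) mul1r.
by rewrite cp_e_monomial ffunE; case: eqP; rewrite ?mulr1 ?mulr0.
Qed.

Lemma quad_form_emb (k : K) (x : gT -> K) :
  \sum_s \sum_t starK (x s) * a_ s * cp_lambda act Phi (cp_emb gT k) s t * x t =
  \sum_s starK (x s) * (a_ s * act s k) * x s.
Proof.
apply: eq_bigr => s _; rewrite (bigD1 s) //= big1 ?addr0 => [|t ts].
  by rewrite lambda_emb eqxx mulr1 !mulrA.
by rewrite lambda_emb eq_sym (negbTE ts) !mulr0 mul0r.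
Qed.

(* Sets of K containing 0, closed under sums and under y |-> a y a^*:
   this is all of the cone structure that (2) uses. *)
Definition conj_closed (N : K -> Prop) :=
  [/\ N 0, forall a b, N a -> N b -> N (a + b)
     & forall a y, N y -> N (a * y * starK a)].

Lemma contr_ext_char (N : K -> Prop) k :
  conj_closed N -> (contr (ext N) k <-> forall s, twist N s k).
Proof.
case=> N0 NA NC; rewrite /cone_contr /cone_ext /cone_twist; split=> Nk.
  move=> s; have := Nk (fun t => (t == s)%:R); rewrite quad_form_emb.
  rewrite (bigD1 s) //= big1 ?addr0 => [|r rs]; last by rewrite (negbTE rs) mulr0.
  by rewrite eqxx starK1 mul1r mulr1.
move=> x; rewrite quad_form_emb; apply: big_ind => // s _.
by have := NC (starK (x s)) _ (Nk s); rewrite starKK.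
Qed.

Lemma herm_cone_conj_closed (N : K -> Prop) :
  herm_cone *%R 1 starK N -> conj_closed N.
Proof. by case=> _ _ NA NC N0; split=> //; have [_ /(_ erefl) []] := N0 0. Qed.

Lemma contr_conj_closed (M : D -> Prop) :
  herm_cone mul (cp_one gT K) starD M -> conj_closed (contr M).
Proof.
case=> _ _ MA MC M0; split.
- rewrite /cone_contr [cp_emb _ _](_ : _ = 0); first by have [_ /(_ erefl) []] := M0 0.
  by apply/ffunP=> t; rewrite !ffunE; case: ifP.
- move=> a b Ma Mb; rewrite /cone_contr [cp_emb _ _](_ : _ = cp_emb gT a + cp_emb gT b).
    exact: MA.
  by apply/ffunP=> t; rewrite !ffunE; case: ifP; rewrite ?addr0.
- move=> a y My; have := MC (cp_emb gT a) _ My.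
  by rewrite /cone_contr starK_def !cp_emb_monomial !emb_mul.
Qed.

Lemma ext_contr_ext (N : K -> Prop) u :
  conj_closed N -> (ext (contr (ext N)) u <-> ext N u).
Proof.
move=> Ncc; split=> Nu.
  by apply/(ext_twist N 1%g) => x; exact: (proj1 (contr_ext_char _ Ncc) (Nu x) 1%g).
by move=> x; apply/contr_ext_char => // s; exact: (proj2 (ext_twist N s u) Nu x).
Qed.

Lemma conj_e_emb s k :
  mul (mul (starD (cp_e K s)) (cp_emb gT k)) (cp_e K s) = cp_emb gT (a_ s * act s k).
Proof.
have [a Ea] := a_in_K s.
have -> : a_ s = a by rewrite /cp_a Ea /cp_f ffunE eqxx.
rewrite cp_mulA cp_e_monomial cp_emb_monomial emb_mul_e -cp_mulA -cp_e_monomial.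
by rewrite Ea cp_emb_monomial emb_mul.
Qed.

(* (5): (M^c)_s = M^c, conjugating by the unit e_s and by its inverse. *)
Lemma twist_contr (M : D -> Prop) s k :
  (forall a x, M x -> M (mul (mul a x) (starD a))) ->
  (twist (contr M) s k <-> contr M k).
Proof.
move=> MC; rewrite /cone_twist /cone_contr -conj_e_emb; split=> Mk; last first.
  by have := MC (starD (cp_e K s)) _ Mk; rewrite starDK.
have [y [ey1 _]] := cp_e_unit s.
have := MC (starD y) _ Mk; rewrite starDK conj_comp.
by rewrite cp_e_monomial ey1 starD1 cp_mul1l cp_mul1r.
Qed.

Lemma contr_ext_contr (M : D -> Prop) k :
  herm_cone mul (cp_one gT K) starD M -> (contr (ext (contr M)) k <-> contr M k).
Proof.
move=> HM; have [_ _ _ MC _] := HM.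
have char_ext := contr_ext_char k (contr_conj_closed HM).
split=> Mk; first by apply/(twist_contr 1%g _ MC); exact: (proj1 char_ext Mk).
by apply/char_ext => s; apply/twist_contr.
Qed.

End CrossedProduct.

Unset Implicit Arguments.
Set Strict Implicit.
Theorem theorem4p2 (gT : finGroupType) (K : fieldType)
    (act : gT -> {rmorphism K -> K}) (Phi : gT -> gT -> K)
    (starK : K -> K) (starD : {ffun gT -> K} -> {ffun gT -> K})
    (char0 : [pchar K] =i pred0)
    (act_faithful : forall s t : gT, (forall k, act s k = act t k) -> s = t)
    (act1 : forall k, act 1%g k = k)
    (actM : forall (s t : gT) k, act (s * t)%g k = act t (act s k))
    (Phi_neq0 : forall s t, Phi s t != 0)
    (Phi_norm : forall s, Phi 1%g s = 1 /\ Phi s 1%g = 1)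
    (Phi_cocycle : forall s t r,
        Phi (s * t)%g r * act r (Phi s t) = Phi s (t * r)%g * Phi t r)
    (D_div : forall x : {ffun gT -> K}, x != 0 ->
        exists y, cp_mul act Phi x y = cp_one gT K /\ cp_mul act Phi y x = cp_one gT K)
    (starD_inv : is_involution (cp_mul act Phi) starD)
    (starK_def : forall k, starD (cp_emb gT k) = cp_emb gT (starK k))
    (a_in_K : forall s, exists k,
        cp_mul act Phi (starD (cp_e K s)) (cp_e K s) = cp_emb gT k)
    (N_nonempty : exists N : K -> Prop,
        herm_cone *%R 1 starK N /\ (forall s, N (cp_a act Phi starD s))) :
  (forall N : K -> Prop,
     herm_cone *%R 1 starK N -> (forall s, N (cp_a act Phi starD s)) ->
     [/\ forall u : {ffun gT -> K}, cone_ext act Phi starK starD N u <->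
           (forall d, N (cp_f (cp_mul act Phi (cp_mul act Phi (starD d) u) d))),
         forall k, cone_contr (cone_ext act Phi starK starD N) k <->
           (forall s, cone_twist act Phi starD N s k),
         forall s u, cone_ext act Phi starK starD (cone_twist act Phi starD N s) u <->
           cone_ext act Phi starK starD N u
       & forall u, cone_ext act Phi starK starD
                     (cone_contr (cone_ext act Phi starK starD N)) u <->
           cone_ext act Phi starK starD N u]) /\
  (forall M : {ffun gT -> K} -> Prop,
     herm_cone (cp_mul act Phi) (cp_one gT K) starD M ->
     (forall (s : gT) (k : K), cone_twist act Phi starD (cone_contr M) s k <-> cone_contr M k) /\
     (forall k, cone_contr (cone_ext act Phi starK starD (cone_contr M)) k <->
        cone_contr M k)).
Proof.
split=> [N HN _ | M HM].
  have Ncc := herm_cone_conj_closed HN.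
  split=> [u | k | s u | u].
  - by eapply ext_trace_char; eassumption.
  - by eapply contr_ext_char; eassumption.
  - by eapply ext_twist; eassumption.
  - by eapply ext_contr_ext; eassumption.
have [_ _ _ MC _] := HM.
split=> [s k | k].
- by eapply twist_contr; eassumption.
- by eapply contr_ext_contr; eassumption.
Qed.
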